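(* Let $L,T$ be positive integers, $p_1<p_2<\dots<p_L$ distinct primes, $N_i=p_i+2L+2T-2$ for $i\in[L]$, $q_0$ a prime power with $q_0\ge N_L$, and $q=q_0^{p_1p_2\cdots p_L}$. Let $A=[A_1\ \cdots\ A_L]\in\mathbb{F}_q^{a\times b}$ and $B$ with $B^{\intercal}=[B_1^{\intercal}\ \cdots\ B_L^{\intercal}]\in\mathbb{F}_q^{c\times b}$, where $A_i\in\mathbb{F}_q^{a\times b/L}$, $B_i\in\mathbb{F}_q^{b/L\times c}$. Then, in the FTP code described in the context, for each $i\in[L]$ the value $h(\alpha_i)=A_iB_i$ can be computed from the responses of the $N_i$ servers $1,\dots,N_i$ for index $i$, namely from $\{\operatorname{tr}_{\mathbb{F}_q/F_i}(v_jk_i(\alpha_j)h(\alpha_j)) : j\in\{L+1,\dots,L+N_i\}\}$.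
   Context: For a finite extension $\mathbb{E}/\mathbb{F}$ of degree $s$, $\operatorname{tr}_{\mathbb{E}/\mathbb{F}}(x)=x+x^{|\mathbb{F}|}+\cdots+x^{|\mathbb{F}|^{s-1}}$, applied entrywise to matrices. FTP code: let $n=N_L+L$. For $i\in[L]$ pick $\alpha_i\in\mathbb{F}_q$ with $[\mathbb{F}_{q_0}(\alpha_i):\mathbb{F}_{q_0}]=p_i$, and let $F_i=\mathbb{F}_{q_0}(\alpha_j: j\in[L],j\ne i)$. Pick distinct $\alpha_{L+1},\dots,\alpha_n\in\mathbb{F}_{q_0}$. Let $R_1,\dots,R_T\in\mathbb{F}_q^{a\times b/L}$, $S_1,\dots,S_T\in\mathbb{F}_q^{b/L\times c}$ be random matrices. Let $f,g$ be polynomials with matrix coefficients over $\mathbb{F}_q$ of degree at most $L+T-1$ with $f(\alpha_i)=A_i,g(\alpha_i)=B_i$ ($i\in[L]$), $f(\alpha_{L+j})=R_j$, $g(\alpha_{L+j})=S_j$ ($j\in[T]$), and $h=fg$. Server $j\in[N_L]$ holds $f(\alpha_{L+j}),g(\alpha_{L+j})$ and hence $h(\alpha_{L+j})$. Define $v_j=\prod_{i\in[n],i\ne j}(\alpha_j-\alpha_i)^{-1}$, $U_i=\{L+1,\dots,L+N_i\}$, and $k_i(x)=\prod_{j\in[n]\setminus(U_i\cup\{i\})}(x-\alpha_j)$. For each $i\in[L]$, server $j\in[N_i]$ sends $\operatorname{tr}_{\mathbb{F}_q/F_i}(v_{L+j}k_i(\alpha_{L+j})h(\alpha_{L+j}))$.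 *)

From HB Require Import structures.
From mathcomp Require Import all_boot all_order all_algebra all_field.
Set Implicit Arguments. Unset Strict Implicit. Unset Printing Implicit Defensive.
Import GRing.Theory.
Local Open Scope ring_scope.

(* F0 plays the role of F_{q0}; K : fieldExtType F0 plays the role of F_q.
   Indices follow the paper: 1-based, functions on nat. *)

(* Relative trace tr_{K/U}(x) = x + x^|U| + ... + x^{|U|^(s-1)},
   s = [K : U] = \dim K / \dim U, |U| = |F0|^(\dim U). *)
Definition ftrace (F0 : finFieldType) (K : fieldExtType F0) (U : {vspace K})
    (x : K) : K :=
  \sum_(k < (\dim {:K} %/ \dim U)%N) x ^+ ((#|F0| ^ \dim U) ^ k)%N.

(* evaluation of a polynomial with matrix coefficients, represented as a
   matrix of polynomials *)
Definition mxpeval (R : comNzRingType) (m n : nat) (f : 'M[{poly R}]_(m, n))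
    (x : R) : 'M[R]_(m, n) := map_mx (fun p => p.[x]) f.

Section FTP.
Variables (F0 : finFieldType) (K : fieldExtType F0).
Variables (L T : nat) (p : nat -> nat) (alpha : nat -> K).

Definition ftpN (i : nat) : nat := (p i + 2 * L + 2 * T - 2)%N.
Definition ftpn : nat := (ftpN L + L)%N.

Definition ftpFi (i : nat) : {vspace K} :=
  <<1%VS & [seq alpha j | j <- iota 1 L & j != i]>>%VS.

Definition ftpv (j : nat) : K :=
  \prod_(1 <= l < ftpn.+1 | l != j) (alpha j - alpha l)^-1.

Definition ftpk (i : nat) (x : K) : K :=
  \prod_(1 <= j < ftpn.+1 |
           ~~ (((L + 1 <= j) && (j <= L + ftpN i))%N || (j == i))) (x - alpha j).
End FTP.

(* By linearity it suffices to show that a polynomial P of degree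
   at most 2(L+T)-2 whose responses all vanish satisfies P(alpha_i) = 0.  For
   m < p_i, the polynomial X^m k_i P has degree below n, so Lagrange's identity
   sum_j v_j Q(alpha_j) = 0 holds for it.  Since k_i vanishes at every node outside
   U_i and {i}, and the nodes of U_i lie in F_{q0}, over which the trace to F_i is
   linear, taking traces gives tr_{F_q/F_i}(alpha_i^m y) = 0 with
   y = v_i k_i(alpha_i) P(alpha_i).  Now F_i(alpha_i) = F_q, because its degree is
   divisible by every p_l, and alpha_i has degree at most p_i over F_i, so the
   alpha_i^m with m < p_i span F_q over F_i.  The trace form is nondegenerate,
   hence y = 0, and P(alpha_i) = 0 because v_i and k_i(alpha_i) are nonzero. *)

From HB Require Import structures.
From mathcomp Require Import all_boot all_order all_algebra all_field.
From mathcomp Require Import zify ring.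
From Stdlib Require Import ClassicalEpsilon.
Set Implicit Arguments.
Unset Strict Implicit.
Unset Printing Implicit Defensive.
Import GRing.Theory.
Local Open Scope ring_scope.

Section FiniteFieldTrace.
Variables (F0 : finFieldType) (K : fieldExtType F0).

Lemma pchar_nat_card_pow k : [pchar K].-nat (#|F0| ^ k)%N.
Proof.
have [p p_pr pcharF0] := finPcharP F0.
have pcharK : p \in [pchar K] by rewrite pchar_lalg.
by rewrite (eq_pnat _ (pcharf_eq pcharK)) (card_pprimeChar pcharF0) -expnM pnatX pnat_id.
Qed.

Lemma ftrace_is_zmod_morphism (U : {vspace K}) : zmod_morphism (ftrace U).
Proof.
move=> x y; rewrite /ftrace -sumrB; apply: eq_bigr => k _.
by rewrite -expnM exprDn_pchar ?exprNn_pchar ?pchar_nat_card_pow.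
Qed.

HB.instance Definition _ (U : {vspace K}) :=
  GRing.isZmodMorphism.Build K K (ftrace U) (ftrace_is_zmod_morphism U).

Lemma ftraceMl (U : {aspace K}) u x : u \in U -> ftrace U (u * x) = u * ftrace U x.
Proof.
move=> Uu; rewrite /ftrace mulr_sumr; apply: eq_bigr => k _; rewrite exprMn.
suff -> : u ^+ ((#|F0| ^ \dim U) ^ k)%N = u by [].
move: Uu; rewrite Fermat's_little_theorem => /eqP uU.
by elim: (val k) => [|j IHj]; rewrite ?expr1 // expnSr exprM IHj uU.
Qed.

(* As a function of w, the trace is a polynomial of degree |U|^(s-1) < |K|,
   where s = [K : U], so it cannot vanish on all of K. *)
Lemma ftrace_neq0 (U : {aspace K}) : exists w, ftrace U w != 0.
Proof.
set Q := (#|F0| ^ \dim U)%N; set s := (\dim {:K} %/ \dim U)%N.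
pose tp : {poly K} := \sum_(k < s) 'X^(Q ^ k).
have dimU_gt0 : (0 < \dim U)%N := adim_gt0 U.
have s_gt0 : (0 < s)%N by rewrite divn_gt0 // dimvS ?subvf.
have Q_gt1 : (1 < Q)%N by rewrite -(expn0 #|F0|) ltn_exp2l ?finNzRing_gt1.
have tpE w : tp.[w] = ftrace U w.
  by rewrite horner_sum; apply: eq_bigr => k _; rewrite hornerXn.
have tp_neq0 : tp != 0.
  have last_s : (s.-1 < s)%N by rewrite prednK.
  apply/eqP => /(congr1 (fun q : {poly K} => q`_(Q ^ s.-1))).
  rewrite coef0 coef_sum (bigD1 (Ordinal last_s)) //= coefXn eqxx big1 ?addr0.
    by move/eqP; rewrite oner_eq0.
  move=> k /eqP k_neq; rewrite coefXn eqn_exp2l //.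
  by case: eqP => // k_eq; case: k_neq; apply: val_inj.
have size_tp : (size tp <= (Q ^ s.-1).+1)%N.
  apply: (leq_trans (size_sum _ _ _)); apply/bigmax_leqP => k _.
  by rewrite size_polyXn ltnS leq_exp2l // -ltnS prednK.
have size_enumK : size (enum (finvect_type K)) = (#|F0| ^ \dim {:K})%N.
  by rewrite -cardE -(card_vspacef (Vector.class (finvect_type K))) card_vspace.
have : ~~ all (fun w => ftrace U w == 0) (enum (finvect_type K)).
  apply/negP => /allP tr0.
  have roots : all (root tp) (enum (finvect_type K)).
    by apply/allP => w /tr0; rewrite rootE tpE.
  have := leq_trans (max_poly_roots tp_neq0 roots (enum_uniq _)) size_tp.
  rewrite size_enumK ltnS /Q -expnM leq_exp2l ?finNzRing_gt1 //; apply/negP.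
  rewrite -ltnNge (leq_trans _ (leq_trunc_div (\dim {:K}) (\dim U))) //.
  by rewrite [X in (_ < X)%N]mulnC ltn_pmul2l // ltn_predL.
by case/allPn => w _ trw; exists w.
Qed.

Lemma ftrace_nondegenerate (U : {aspace K}) y :
  (forall z, ftrace U (z * y) = 0) -> y = 0.
Proof.
move=> tr0; have [w trw] := ftrace_neq0 U; apply/eqP; apply: contraNT trw.
by move=> y_neq0; rewrite -(divfK y_neq0 w) tr0.
Qed.

Lemma ftrace_adjoin_powers (U : {aspace K}) x y : <<U; x>>%VS = fullv ->
  (forall m, (m < adjoin_degree U x)%N -> ftrace U (x ^+ m * y) = 0) -> y = 0.
Proof.
move=> Ux_full tr0; apply: (@ftrace_nondegenerate U) => z.
have Uxz : z \in <<U; x>>%VS by rewrite Ux_full memvf.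
rewrite -(Fadjoin_poly_eq Uxz) horner_coef mulr_suml raddf_sum big1 // => m _.
rewrite -mulrA /= ftraceMl ?tr0 ?mulr0 //; last exact/polyOverP/Fadjoin_polyOver.
exact: leq_trans (ltn_ord m) (size_Fadjoin_poly _ _ _).
Qed.

End FiniteFieldTrace.

Lemma adjoin_degreeS (F : fieldType) (L : fieldExtType F) (U V : {subfield L}) x :
  (U <= V)%VS -> (adjoin_degree V x <= adjoin_degree U x)%N.
Proof.
move=> sUV; have := dvdp_leq (monic_neq0 (monic_minPoly U x)) (minPolyS x sUV).
by rewrite !size_minPoly ltnS.
Qed.

Section LagrangeInterpolation.
Variables (F : fieldType) (I : eqType) (r : seq I) (b : I -> F).
Hypotheses (r_uniq : uniq r) (b_inj : {in r &, injective b}).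

Local Notation nodal j := (\prod_(l <- r | l != j) ('X - (b l)%:P)).
Local Notation weight j := (\prod_(l <- r | l != j) (b j - b l)^-1).

Lemma horner_nodal j x : (nodal j).[x] = \prod_(l <- r | l != j) (x - b l).
Proof. by rewrite horner_prod; under eq_bigr do rewrite hornerXsubC. Qed.

Lemma size_nodal j : j \in r -> size (nodal j) = size r.
Proof.
move=> rj; rewrite -big_filter -(big_map b predT (fun x => 'X - x%:P)).
rewrite size_prod_XsubC size_map size_filter.
by have := count_predC (pred1 j) r; rewrite count_uniq_mem // rj add1n => <-.
Qed.

Lemma horner_nodal_weight j : j \in r -> (nodal j).[b j] * weight j = 1.
Proof.
move=> rj; rewrite horner_nodal prodfV mulfV // prodf_seq_neq0.
apply/allP => l rl; apply/implyP => l_neq_j; rewrite subr_eq0.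
by apply: contra_neq l_neq_j => /b_inj ->.
Qed.

Lemma lagrange_interpolation (P : {poly F}) : (size P <= size r)%N ->
  P = \sum_(j <- r) (P.[b j] * weight j) *: nodal j.
Proof.
move=> size_P; apply/esym/eqP; rewrite -subr_eq0; apply/eqP.
apply: (roots_geq_poly_eq0 (rs := map b r)).
- apply/allP => _ /mapP[k rk ->]; rewrite rootE hornerD hornerN horner_sum subr_eq0.
  rewrite (bigD1_seq k) //= [X in _ + X]big1_seq ?addr0.
    by rewrite hornerZ -mulrA [_ * (nodal k).[_]]mulrC horner_nodal_weight ?mulr1.
  move=> j /andP[j_neq_k rj]; rewrite hornerZ horner_nodal.
  by rewrite [X in _ * X]big_mkcond (bigD1_seq k) //= eq_sym j_neq_k subrr !mul0r mulr0.
- by rewrite map_inj_in_uniq.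
- rewrite size_map (leq_trans (size_polyD _ _)) // size_polyN geq_max size_P andbT.
  apply: (leq_trans (size_sum _ _ _)); apply/bigmax_leqP_seq => j rj _.
  by rewrite (leq_trans (size_scale_leq _ _)) ?size_nodal.
Qed.

Lemma sum_lagrange_weight_eq0 (P : {poly F}) : (size P < size r)%N ->
  \sum_(j <- r) P.[b j] * weight j = 0.
Proof.
move=> size_P; have r_gt0 : (0 < size r)%N by case: (size r) size_P.
have := congr1 (fun q : {poly F} => q`_(size r).-1) (lagrange_interpolation (ltnW size_P)).
rewrite nth_default; last by rewrite -ltnS prednK.
rewrite coef_sum => coef_eq0; rewrite [RHS]coef_eq0; apply: eq_big_seq => j rj.
rewrite coefZ -{1}(size_nodal rj) -lead_coefE.
by rewrite (monicP (monic_prod_XsubC _ _ _)) mulr1.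
Qed.

End LagrangeInterpolation.

Lemma dvdn_prod_uniq_primes (s : seq nat) d :
  uniq s -> all prime s -> all (dvdn^~ d) s -> (\prod_(q <- s) q %| d)%N.
Proof.
elim: s => [|q s IH] /=; first by rewrite big_nil dvd1n.
case/andP => q_notin_s s_uniq /andP[q_prime s_prime] /andP[q_dvd s_dvd].
rewrite big_cons Gauss_dvd ?q_dvd ?IH // prime_coprime // Euclid_dvd_prod // big_has.
apply: contra q_notin_s => /hasP[q' s_q' q_dvd_q'].
by move: q_dvd_q'; rewrite dvdn_prime2 ?(allP s_prime q' s_q') // => /eqP ->.
Qed.

Lemma mxpeval_mul (R : comNzRingType) m k l (f : 'M[{poly R}]_(m, k))
    (g : 'M[{poly R}]_(k, l)) x :
  mxpeval (f *m g) x = mxpeval f x *m mxpeval g x.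
Proof.
apply/matrixP => r s; rewrite !mxE horner_sum; apply: eq_bigr => j _.
by rewrite hornerM !mxE.
Qed.

Lemma size_mulmx_poly_le (R : comNzRingType) m k l (f : 'M[{poly R}]_(m, k))
    (g : 'M[{poly R}]_(k, l)) d1 d2 :
  (forall r s, size (f r s) <= d1)%N -> (forall r s, size (g r s) <= d2)%N ->
  forall r s, (size ((f *m g) r s) <= (d1 + d2).-1)%N.
Proof.
move=> size_f size_g r s; rewrite mxE; apply: (leq_trans (size_sum _ _ _)).
apply/bigmax_leqP => j _; apply: (leq_trans (size_polyMleq _ _)).
by rewrite -!subn1 leq_sub2r // leq_add.
Qed.

Lemma exists_decoder (X Y Z : Type) (z0 : Z) (admissible : X -> Prop)
    (encode : X -> Y) (value : X -> Z) :
  (forall x x', admissible x -> admissible x' -> encode x = encode x' ->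
     value x = value x') ->
  exists D : Y -> Z, forall x, admissible x -> D (encode x) = value x.
Proof.
move=> encode_inj.
pose preimage y z := exists2 x, admissible x & encode x = y /\ z = value x.
exists (fun y => epsilon (inhabits z0) (preimage y)) => x adm_x.
have [|x' adm_x' [eq_enc ->]] := epsilon_spec (inhabits z0) (preimage (encode x)).
  by exists (value x), x.
exact: encode_inj.
Qed.

Section FTPDecoding.
Variables (F0 : finFieldType) (K : fieldExtType F0).
Variables (L T : nat) (p : nat -> nat) (alpha : nat -> K).
Local Notation n := (ftpn L T p).
Hypothesis p_prime : forall i, (1 <= i <= L)%N -> prime (p i).
Hypothesis p_incr : forall i, (1 <= i < L)%N -> (p i < p i.+1)%N.
Hypothesis dimK : \dim {:K} = (\prod_(1 <= i < L.+1) p i)%N.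
Hypothesis dim_alpha : forall i, (1 <= i <= L)%N -> \dim <<1%VS; alpha i>>%VS = p i.
Hypothesis alpha_base : forall j, (L + 1 <= j <= n)%N -> alpha j \in 1%VS.
Hypothesis alpha_base_inj : {in [pred j | (L + 1 <= j <= n)%N] &, injective alpha}.

Lemma p_increasing : {in [pred i | 1 <= i <= L]%N &, {homo p : i j / i < j}}%N.
Proof.
apply: homo_ltn_in ltn_trans _ _ => [i j | i]; rewrite !inE.
  by move=> ? ? k ?; rewrite inE; lia.
by move=> ? ?; apply: p_incr; lia.
Qed.

Lemma p_inj : {in [pred i | 1 <= i <= L]%N &, injective p}.
Proof. exact: incn_inj_in (leq_mono_in p_increasing). Qed.

Lemma adjoin_degree_alpha l : (1 <= l <= L)%N -> adjoin_degree 1%AS (alpha l) = p l.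
Proof. by move=> l_range; rewrite -dim_alpha // dim_Fadjoin dimv1 muln1. Qed.

Lemma alpha_notin_base l : (1 <= l <= L)%N -> alpha l \notin 1%VS.
Proof.
move=> l_range; rewrite -adjoin_deg_eq1 adjoin_degree_alpha //.
by rewrite gtn_eqF ?prime_gt1 ?p_prime.
Qed.

Lemma alpha_inj : {in [pred j | 1 <= j <= n]%N &, injective alpha}.
Proof.
move=> j j'; rewrite !inE => j_range j'_range eq_alpha.
have [jL | Lj] := leqP j L; have [j'L | Lj'] := leqP j' L.
- apply: p_inj; rewrite ?inE; try lia.
  by rewrite -!adjoin_degree_alpha ?eq_alpha //; lia.
- by have := @alpha_notin_base j; rewrite eq_alpha alpha_base; lia.
- by have := @alpha_notin_base j'; rewrite -eq_alpha alpha_base; lia.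
- by apply: alpha_base_inj eq_alpha; rewrite inE; lia.
Qed.

Variable i : nat.
Hypothesis i_range : (1 <= i <= L)%N.
Local Notation N := (ftpN L T p i).

Let L_N_le_n : (L + N <= n)%N.
Proof.
have : (p i <= p L)%N by rewrite (leq_mono_in p_increasing) ?inE; lia.
by rewrite /ftpn /ftpN; lia.
Qed.

Let Fi : {aspace K} := <<1%AS & [seq alpha j | j <- iota 1 L & j != i]>>%AS.

Lemma Fi_adjoin_full : <<Fi; alpha i>>%VS = fullv.
Proof.
pose E := <<Fi; alpha i>>%AS.
have alphaE l : (1 <= l <= L)%N -> alpha l \in E.
  move=> l_range; have [-> | l_neq_i] := eqVneq l i; first exact: memv_adjoin.
  apply: (subvP (subv_adjoin Fi (alpha i))); apply: seqv_sub_adjoin.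
  by rewrite map_f // mem_filter l_neq_i mem_iota; lia.
have dvd_dimE : (\dim {:K} %| \dim E)%N.
  rewrite dimK -(big_map p predT id) dvdn_prod_uniq_primes //.
  - rewrite map_inj_in_uniq ?iota_uniq // => l l'; rewrite !mem_index_iota => ? ?.
    by apply: p_inj; rewrite inE; lia.
  - by apply/allP => _ /mapP[l + ->]; rewrite mem_index_iota => ?; apply: p_prime; lia.
  apply/allP => _ /mapP[l + ->]; rewrite mem_index_iota => ?.
  by rewrite -dim_alpha ?field_dimS ?sub_adjoin1v ?alphaE //; lia.
by apply/eqP; rewrite eqEdim subvf (dvdn_leq (adim_gt0 E) dvd_dimE).
Qed.

Lemma adjoin_degree_Fi_alpha : (adjoin_degree Fi (alpha i) <= p i)%N.
Proof. by rewrite -adjoin_degree_alpha // adjoin_degreeS // sub1v. Qed.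

Let k_factor j := ~~ (((L + 1 <= j) && (j <= L + N))%N || (j == i)).
Let kpoly : {poly K} := \prod_(1 <= j < n.+1 | k_factor j) ('X - (alpha j)%:P).

Lemma horner_kpoly x : kpoly.[x] = ftpk L T p alpha i x.
Proof. by rewrite horner_prod; under eq_bigr do rewrite hornerXsubC. Qed.

Lemma kpoly_root j : (1 <= j <= n)%N -> k_factor j -> kpoly.[alpha j] = 0.
Proof.
move=> j_range kf_j; rewrite horner_prod; apply/eqP; rewrite prodf_seq_eq0.
by apply/hasP; exists j; rewrite ?mem_index_iota ?kf_j ?hornerXsubC ?subrr ?eqxx.
Qed.

Lemma size_kpoly : (size kpoly <= n - N)%N.
Proof.
rewrite /kpoly -big_filter -(big_map alpha predT (fun x => 'X - x%:P)).
rewrite size_prod_XsubC size_map size_filter.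
have -> : index_iota 1 n.+1 = iota 1 L ++ iota L.+1 N ++ iota (L + N).+1 (n - (L + N)).
  by rewrite -!iotaD /index_iota; congr iota; lia.
rewrite !count_cat.
have count_low : (count k_factor (iota 1 L) <= L.-1)%N.
  have i_in : i \in iota 1 L by rewrite mem_iota; lia.
  have := count_predC (pred1 i) (iota 1 L).
  rewrite count_uniq_mem ?iota_uniq // i_in size_iota /= => count_L.
  apply: (leq_trans (sub_count (a2 := predC (pred1 i)) _ _)) => [j|].
    by rewrite /k_factor negb_or => /andP[_].
  by move: count_L; set c := count _ _; lia.
have count_mid : count k_factor (iota L.+1 N) = 0%N.
  apply/eqP; rewrite -(count_pred0 (iota L.+1 N)); apply/eqP/eq_in_count => j.
  by rewrite mem_iota /k_factor /=; lia.
by have := count_size k_factor (iota (L + N).+1 (n - (L + N))); rewrite size_iota; lia.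
Qed.

Lemma alpha_i_sub_neq0 l : (1 <= l <= n)%N -> l != i -> alpha i - alpha l != 0.
Proof.
move=> l_range l_neq_i; rewrite subr_eq0; apply: contra_neq l_neq_i => eq_alpha.
by apply: alpha_inj (esym eq_alpha); rewrite inE; lia.
Qed.

Lemma ftpv_neq0 : ftpv L T p alpha i != 0.
Proof.
rewrite prodf_seq_neq0; apply/allP => l; rewrite mem_index_iota => l_range.
by apply/implyP => l_neq_i; rewrite invr_eq0 alpha_i_sub_neq0 //; lia.
Qed.

Lemma kpoly_alpha_neq0 : kpoly.[alpha i] != 0.
Proof.
rewrite horner_prod prodf_seq_neq0; apply/allP => l; rewrite mem_index_iota => l_range.
apply/implyP => kf_l; rewrite hornerXsubC alpha_i_sub_neq0 //.
by apply: contraNneq kf_l => ->; rewrite /k_factor eqxx orbT.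
Qed.

Section Responses.
Variable P : {poly K}.
Hypothesis size_P : (size P <= 2 * (L + T) - 1)%N.
Hypothesis responses_eq0 : forall j, (1 <= j <= N)%N ->
  ftrace (ftpFi L alpha i)
    (ftpv L T p alpha (L + j) * ftpk L T p alpha i (alpha (L + j)) * P.[alpha (L + j)]) = 0.

Lemma ftrace_alpha_powers_eq0 m : (m < p i)%N ->
  ftrace Fi (alpha i ^+ m * (ftpv L T p alpha i * kpoly.[alpha i] * P.[alpha i])) = 0.
Proof.
move=> lt_m.
pose G j := ('X^m * kpoly * P).[alpha j] * ftpv L T p alpha j.
have sumG : \sum_(j <- index_iota 1 n.+1) G j = 0.
  apply: sum_lagrange_weight_eq0; first exact: iota_uniq.
    by move=> j j'; rewrite !mem_index_iota => ? ?; apply: alpha_inj; rewrite inE; lia.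
  rewrite size_iota subn1 /=.
  apply: (leq_ltn_trans (size_polyMleq _ _)); rewrite -subn1.
  have := size_polyMleq 'X^m kpoly; rewrite size_polyXn.
  by have := size_kpoly; have := L_N_le_n; rewrite /ftpN; lia.
have GE j : G j = alpha j ^+ m * (ftpv L T p alpha j * kpoly.[alpha j] * P.[alpha j]).
  by rewrite /G !hornerM hornerXn; ring.
have trG j : (1 <= j <= n)%N -> j != i -> ftrace Fi (G j) = 0.
  move=> j_range j_neq_i; have [kf_j | ] := boolP (k_factor j).
    by rewrite GE kpoly_root // mulr0 mul0r mulr0 raddf0.
  rewrite /k_factor negbK (negbTE j_neq_i) orbF => j_in_U.
  have alpha_jm : alpha j ^+ m \in Fi.
    by apply/rpredX/(subvP (sub1v Fi))/alpha_base; lia.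
  rewrite GE ftraceMl // horner_kpoly -(subnKC (_ : L <= j)%N) ?responses_eq0 ?mulr0 //; lia.
have i_in : i \in index_iota 1 n.+1 by rewrite mem_index_iota; lia.
rewrite (bigD1_seq i) ?iota_uniq //= in sumG.
have := congr1 (ftrace Fi) sumG; rewrite raddfD raddf_sum big1_seq ?addr0 ?raddf0.
  by move=> <-; rewrite GE.
by move=> j /andP[j_neq_i]; rewrite mem_index_iota => ?; apply: trG; lia.
Qed.

Lemma responses_eq0_horner_alpha : P.[alpha i] = 0.
Proof.
have : ftpv L T p alpha i * kpoly.[alpha i] * P.[alpha i] = 0.
  apply: (ftrace_adjoin_powers Fi_adjoin_full) => m lt_m.
  exact/ftrace_alpha_powers_eq0/(leq_trans lt_m adjoin_degree_Fi_alpha).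
by move/eqP; rewrite !mulf_eq0 (negbTE ftpv_neq0) (negbTE kpoly_alpha_neq0) => /eqP.
Qed.

End Responses.

End FTPDecoding.

Theorem lemma1 (F0 : finFieldType) (K : fieldExtType F0)
  (L T : nat) (p : nat -> nat) (a b c : nat) (alpha : nat -> K) :
  (0 < L)%N -> (0 < T)%N ->
  (forall i, (1 <= i <= L)%N -> prime (p i)) ->
  (forall i, (1 <= i < L)%N -> (p i < p i.+1)%N) ->
  (ftpN L T p L <= #|F0|)%N ->
  \dim {:K} = (\prod_(1 <= i < L.+1) p i)%N ->
  (L %| b)%N ->
  (* alpha_i, i in [L], has degree p_i over F_{q0} *)
  (forall i, (1 <= i <= L)%N -> \dim <<1%VS; alpha i>>%VS = p i) ->
  (* alpha_{L+1}, ..., alpha_n are distinct elements of F_{q0} *)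
  (forall j, (L + 1 <= j <= ftpn L T p)%N -> alpha j \in 1%VS) ->
  {in [pred j | (L + 1 <= j <= ftpn L T p)%N] &,
     forall j j', alpha j = alpha j' -> j = j'} ->
  forall i, (1 <= i <= L)%N ->
  exists D : (nat -> 'M[K]_(a, c)) -> 'M[K]_(a, c),
  forall (A : nat -> 'M[K]_(a, b %/ L)) (B : nat -> 'M[K]_(b %/ L, c))
         (R : nat -> 'M[K]_(a, b %/ L)) (S : nat -> 'M[K]_(b %/ L, c))
         (f : 'M[{poly K}]_(a, b %/ L)) (g : 'M[{poly K}]_(b %/ L, c)),
    (forall r s, (size (f r s) <= L + T)%N) ->
    (forall r s, (size (g r s) <= L + T)%N) ->
    (forall l, (1 <= l <= L)%N ->
        mxpeval f (alpha l) = A l /\ mxpeval g (alpha l) = B l) ->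
    (forall j, (1 <= j <= T)%N ->
        mxpeval f (alpha (L + j)%N) = R j /\ mxpeval g (alpha (L + j)%N) = S j) ->
    let h := f *m g in
    D (fun j => if (1 <= j <= ftpN L T p i)%N then
                  map_mx (ftrace (ftpFi L alpha i))
                    ((ftpv L T p alpha (L + j)%N *
                      ftpk L T p alpha i (alpha (L + j)%N)) *:
                       mxpeval h (alpha (L + j)%N))
                else 0)
    = A i *m B i.
Proof.
(* The bound on |F_{q0}| only guarantees that the distinct nodes exist; here
   they are given. *)
move=> _ _ p_prime p_incr _ dimK _ dim_alpha alpha_base alpha_base_inj i i_range.
pose admissible (h : 'M[{poly K}]_(a, c)) :=
  forall r s, (size (h r s) <= 2 * (L + T) - 1)%N.
pose responses (h : 'M[{poly K}]_(a, c)) j :=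
  if (1 <= j <= ftpN L T p i)%N then
    map_mx (ftrace (ftpFi L alpha i))
      ((ftpv L T p alpha (L + j)%N * ftpk L T p alpha i (alpha (L + j)%N)) *:
         mxpeval h (alpha (L + j)%N))
  else 0.
have [|D decodeP] :=
  @exists_decoder _ _ _ 0 admissible responses (fun h => mxpeval h (alpha i)).
  move=> h h' adm_h adm_h' eq_resp; apply/matrixP => r s; apply/eqP.
  rewrite !mxE -subr_eq0 -hornerN -hornerD; apply/eqP.
  apply: (responses_eq0_horner_alpha p_prime p_incr dimK dim_alpha alpha_base
            alpha_base_inj i_range).
    by rewrite (leq_trans (size_polyD _ _)) // size_polyN geq_max adm_h adm_h'.
  move=> j j_range; have := congr1 (fun X : nat -> 'M[K]_(a, c) => X j r s) eq_resp.
  by rewrite /responses j_range !mxE hornerD hornerN mulrBr raddfB /= => ->; rewrite subrr.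
exists D => A B R S f g size_f size_g fg_AB _ h.
rewrite decodeP => [|r s]; last first.
  by rewrite (leq_trans (size_mulmx_poly_le size_f size_g r s)) //; lia.
by have [<- <-] := fg_AB i i_range; rewrite mxpeval_mul.
Qed.
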